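(* Let $g\ge2$ and $n\ge2$. Then $P_{g,n}(a_1,\dots,a_n)$ is divisible by $\prod_{i=1}^n a_i$ in the polynomial ring $\mathbb{Q}[a_1,\dots,a_n]$, and $\tilde P(a_1,\dots,a_n):=P_{g,n}(a_1,\dots,a_n)/\prod_{i=1}^na_i$ is a polynomial of degree (at most) $2g-4+n$.
   Context: For $g\ge2$, $n\ge1$, $$P_{g,n}(a_1,\dots,a_n):=\sum_{k=1}^n\frac{(-1)^k(2g-3+k)!}{k!}\sum_{(I_1,\dots,I_k)}\ \sum_{\substack{d_1,\dots,d_k\in\mathbb{Z}_{\ge0}\\ d_1+\cdots+d_k=g-2+n}}\prod_{j=1}^k\binom{2a_{[I_j]}+1}{2d_j}\prod_{i=1}^{|I_j|-1}(2d_j+1-2i),$$ where $(I_1,\dots,I_k)$ runs over ordered $k$-tuples of nonempty pairwise disjoint subsets of $\{1,\dots,n\}$ with union $\{1,\dots,n\}$, $a_{[I]}:=\sum_{\ell\in I}a_\ell$, and $\binom{x}{m}:=x(x-1)\cdots(x-m+1)/m!$ for $m\ge0$, a polynomial in $x$ of degree $m$. *)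

From mathcomp Require Import all_boot all_order all_algebra.
Set Implicit Arguments. Unset Strict Implicit. Unset Printing Implicit Defensive.
Import GRing.Theory Num.Theory.
Local Open Scope ring_scope.

Definition binomQ (x : rat) (m : nat) : rat :=
  (\prod_(i < m) (x - i%:R)) / (m`!)%:R.

Definition ordered_set_partition (n k : nat) (I : {ffun 'I_k -> {set 'I_n}}) : bool :=
  [&& [forall j, I j != set0],
      [forall j, forall j', (j != j') ==> [disjoint I j & I j']]
    & (\bigcup_(j < k) I j == [set: 'I_n])].

Definition asum (n : nat) (a : 'I_n -> rat) (I : {set 'I_n}) : rat :=
  \sum_(l in I) a l.

(* The polynomial P_{g,n}, as a function of (a_1,...,a_n) in Q^n.
   The d_j range over nonnegative integers with sum g-2+n, hence each
   d_j < g-1+n; they are encoded as ordinals 'I_(g-1+n). *)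
Definition Pgn (g n : nat) (a : 'I_n -> rat) : rat :=
  \sum_(1 <= k < n.+1)
    ((-1) ^+ k * ((2 * g - 3 + k)`!)%:R / (k`!)%:R *
     \sum_(I : {ffun 'I_k -> {set 'I_n}} | ordered_set_partition I)
       \sum_(d : {ffun 'I_k -> 'I_(g - 1 + n)} |
               (\sum_(j < k) (d j : nat))%N == (g - 2 + n)%N)
         \prod_(j < k)
           (binomQ (2 * asum a (I j) + 1) (2 * d j) *
            \prod_(1 <= i < #|I j|) (((2 * d j + 1)%N)%:R - ((2 * i)%N)%:R))).

Definition mpoly (n : nat) := seq (rat * {ffun 'I_n -> nat}).

Definition meval (n : nat) (p : mpoly n) (a : 'I_n -> rat) : rat :=
  \sum_(m <- (p : seq (rat * {ffun 'I_n -> nat}))) m.1 * \prod_(i < n) a i ^+ m.2 i.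

Definition mdeg_le (n : nat) (p : mpoly n) (D : nat) : bool :=
  all (fun m : rat * {ffun 'I_n -> nat} => (\sum_(i < n) m.2 i <= D)%N) p.

Arguments Pgn g n a : clear implicits.

(* Write P_{g,n} = sum_k c_k sum_I w(I), where c_k = (-1)^k (2g-3+k)!/k! and w(I)
   is the inner sum over (d_j) for the ordered partition I.  If a_i = 0, putting i
   into a block S at exponent d multiplies its factor by 2d+1-2|S|.  Sorting the
   partitions of {1..n} into k+1 blocks by the block of i, the factors add up to
   2g-1+k when i joins a block of a partition of the other points, while a singleton
   block {i} is simply dropped; so the partitions into k+1 blocks contribute
   (2g-1+k) W_{k+1} + (k+1) W_k, with W_k the sum over partitions of the n-1 other
   points into k blocks.  The recursion (k+1) c_{k+1} = -(2g-2+k) c_k makes the sum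
   over k telescope to 0.  Hence P_{g,n} vanishes on every hyperplane a_i = 0, every
   monomial of P_{g,n} contains every variable, and dividing by a_1...a_n lowers the
   total degree 2(g-2+n) of P_{g,n} by n. *)

From Pilot Require Import Defs.
From mathcomp Require Import all_boot all_order all_algebra.
From mathcomp Require Import zify ring.
From mathcomp Require Import mpoly.
Set Implicit Arguments. Unset Strict Implicit. Unset Printing Implicit Defensive.
Import GRing.Theory Num.Theory.
Local Open Scope ring_scope.

Section OrderedPartitions.
Variables (n k : nat).
Implicit Types (I : {ffun 'I_k -> {set 'I_n}}) (S : {set 'I_n}) (l : 'I_n).

Definition occ I l : nat := \sum_(j < k) (l \in I j).

Definition covers S I : bool := [forall l, occ I l == (l \in S)].

Definition nonempty_blocks I : bool := [forall j, I j != set0].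

Definition partition_but (j0 : 'I_k) S I : bool :=
  covers S I && [forall j, (j != j0) ==> (I j != set0)].

Lemma partition_but_nonempty j0 S I :
  partition_but j0 S I && (I j0 != set0) = nonempty_blocks I && covers S I.
Proof.
rewrite /partition_but -andbA andbC; congr (_ && _); apply/andP/forallP => [[I_ne I_j0] j|I_ne].
  by case: (j =P j0) => [->//|/eqP j_j0]; move/forallP/(_ j): I_ne; rewrite j_j0.
by split; [apply/forallP => j; rewrite I_ne implybT | apply: I_ne].
Qed.

Lemma occ_eq0 I l : occ I l = 0%N -> forall j, l \notin I j.
Proof. by move/eqP; rewrite sum_nat_eq0 => /forallP I_l j; have := I_l j; case: (l \in I j). Qed.

Lemma occ_eq1 I l : occ I l = 1%N -> exists j0, forall j, (l \in I j) = (j == j0).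
Proof.
rewrite /occ -big_mkcond /= sum_nat_cond_const muln1 => /eqP /cards1P [j0 blocks_l].
by exists j0 => j; rewrite -in_set1 -blocks_l inE.
Qed.

Lemma ordered_set_partitionE I :
  ordered_set_partition I = nonempty_blocks I && covers setT I.
Proof.
rewrite /ordered_set_partition; congr (_ && _); apply/idP/forallP.
  case/andP => /forallP disj /eqP cover l; rewrite in_setT.
  have /bigcupP [j0 _ l_j0] : l \in \bigcup_(j < k) I j by rewrite cover in_setT.
  rewrite /occ (bigD1 j0) //= l_j0 big1 // => j j_j0.
  have /forallP /(_ j) := disj j0; rewrite eq_sym j_j0 /= => dis.
  by rewrite (disjointFr dis l_j0).
move=> cov; apply/andP; split.
  apply/forallP => j; apply/forallP => j'; apply/implyP => j_j'.
  rewrite -setI_eq0; apply/eqP/setP => l; rewrite !inE.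
  apply/negP => /andP [l_j l_j']; have := cov l.
  rewrite in_setT /occ (bigD1 j) //= l_j (bigD1 j') 1?eq_sym //=.
  by rewrite l_j'.
apply/eqP/setP => l; rewrite in_setT; have /eqP := cov l.
rewrite in_setT => /occ_eq1 [j0 l_I].
by apply/bigcupP; exists j0 => //; rewrite l_I.
Qed.

Lemma sum_card_covers S I : covers S I -> (\sum_(j < k) #|I j|)%N = #|S|.
Proof.
have card_sum (A : {set 'I_n}) : #|A| = (\sum_l (l \in A))%N.
  by rewrite -sum1_card big_mkcond.
move/forallP => cov; rewrite card_sum (eq_bigr _ (fun j _ => card_sum (I j))).
by rewrite exchange_big; apply: eq_bigr => l _; apply/eqP/cov.
Qed.

End OrderedPartitions.

Lemma coef_prod_sumX (R : comNzRingType) (M N k : nat) (F : 'I_k -> nat -> R) :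
  (\prod_(j < k) \sum_(e < M) F j e *: 'X^e)`_N =
  \sum_(d : {ffun 'I_k -> 'I_M} | (\sum_(j < k) (d j : nat))%N == N) \prod_(j < k) F j (d j).
Proof.
rewrite bigA_distr_bigA /= coef_sum [RHS]big_mkcond /=; apply: eq_bigr => d _.
rewrite (eq_bigr (fun j => (F j (d j))%:P * 'X^(d j))); last by move=> j _; rewrite mul_polyC.
rewrite big_split /= -rmorph_prod prodrXr coefCM coefXn.
by rewrite eq_sym; case: eqP; rewrite ?mulr1 ?mulr0.
Qed.

Section Weights.
Variables (R : comNzRingType) (phi : {rmorphism rat -> R}) (g n : nat) (a : 'I_n -> R).
Implicit Types (S : {set 'I_n}) (e : nat).

Definition block_sum S : R := \sum_(l in S) a l.

Definition binom_in (x : R) (m : nat) : R :=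
  (\prod_(i < m) (x - i%:R)) * phi ((m`!)%:R)^-1.

Definition block_factor (e s : nat) : R := ((2 * e + 1)%N)%:R - ((2 * s)%N)%:R.

Definition block_weight S e : R :=
  binom_in (2 * block_sum S + 1) (2 * e) * \prod_(1 <= i < #|S|) block_factor e i.

Definition weight k (I : {ffun 'I_k -> {set 'I_n}}) : R :=
  \sum_(d : {ffun 'I_k -> 'I_(g - 1 + n)} |
          (\sum_(j < k) (d j : nat))%N == (g - 2 + n)%N)
    \prod_(j < k) block_weight (I j) (d j).

Definition Pcoef (k : nat) : rat := (-1) ^+ k * ((2 * g - 3 + k)`!)%:R / (k`!)%:R.

(* P_{g,n} at a point [a] of R^n, R receiving the rationals through [phi]; for
   R = rat and phi = id it is [Pgn] itself. *)
Definition Pgn_in : R :=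
  \sum_(1 <= k < n.+1)
    (phi (Pcoef k) * \sum_(I : {ffun 'I_k -> {set 'I_n}} | ordered_set_partition I) weight I).

Lemma block_weight_set0 e : block_weight set0 e = (e == 0%N)%:R.
Proof.
rewrite /block_weight /block_sum big_set0 mulr0 add0r cards0 big_geq // mulr1 /binom_in.
case: e => [|e]; first by rewrite big_ord0 mul1r fact0 invr1 rmorph1.
by rewrite mul2n doubleS !big_ord_recl /= subrr mul0r mulr0 mul0r.
Qed.

Definition block_poly S : {poly R} :=
  \sum_(e < g - 1 + n) block_weight S e *: 'X^e.

Lemma weightE k (I : {ffun 'I_k -> {set 'I_n}}) :
  weight I = (\prod_(j < k) block_poly (I j))`_(g - 2 + n).
Proof. by rewrite (coef_prod_sumX _ _ (fun j e => block_weight (I j) e)). Qed.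

Lemma block_poly_set0 : (0 < g - 1 + n)%N -> block_poly set0 = 1.
Proof.
rewrite /block_poly; case: (g - 1 + n)%N => // M _.
rewrite big_ord_recl block_weight_set0 scale1r big1 ?addr0 // => e _.
by rewrite block_weight_set0 scale0r.
Qed.

Hypothesis g_ge2 : (2 <= g)%N.

Lemma Pcoef_rec k : Pcoef k.+1 * (k.+1)%:R = - (Pcoef k * (2 * g - 2 + k)%:R).
Proof.
rewrite /Pcoef; have -> : (2 * g - 3 + k.+1 = (2 * g - 3 + k).+1)%N by lia.
have -> : (2 * g - 2 + k = (2 * g - 3 + k).+1)%N by lia.
have k_fact : (k`!)%:R != 0 :> rat by rewrite pnatr_eq0 -lt0n fact_gt0.
rewrite !factS !natrM exprS; field.
by rewrite k_fact addrC natr1 pnatr_eq0.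
Qed.

Section EmptyBlock.
Variables (k : nat) (j0 : 'I_k.+1).
Implicit Types (I : {ffun 'I_k.+1 -> {set 'I_n}}) (J : {ffun 'I_k -> {set 'I_n}}).

Definition insert_block J : {ffun 'I_k.+1 -> {set 'I_n}} :=
  [ffun j => if unlift j0 j is Some j' then J j' else set0].

Definition drop_block I : {ffun 'I_k -> {set 'I_n}} :=
  [ffun j' => I (lift j0 j')].

Lemma drop_insert_block J : drop_block (insert_block J) = J.
Proof. by apply/ffunP => j; rewrite !ffunE liftK. Qed.

Lemma insert_drop_block I : I j0 = set0 -> insert_block (drop_block I) = I.
Proof.
by move=> I_j0; apply/ffunP => j; rewrite ffunE; case: (unliftP j0 j) => [j'|] ->; rewrite ?ffunE.
Qed.

Lemma occ_insert_block J l : occ (insert_block J) l = occ J l.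
Proof.
rewrite /occ (bigD1_ord j0) //= ffunE unlift_none in_set0 add0n.
by apply: eq_bigr => j _; rewrite ffunE liftK.
Qed.

Lemma weight_insert_block J : (0 < g - 1 + n)%N -> weight (insert_block J) = weight J.
Proof.
move=> M_gt0; rewrite !weightE (bigD1_ord j0) //= ffunE unlift_none block_poly_set0 // mul1r.
by under eq_bigr do rewrite ffunE liftK.
Qed.

Lemma sum_weight_empty_block S : (0 < g - 1 + n)%N ->
  \sum_(I | partition_but j0 S I && (I j0 == set0)) weight I =
  \sum_(J : {ffun 'I_k -> {set 'I_n}} | nonempty_blocks J && covers S J) weight J.
Proof.
move=> M_gt0; rewrite (reindex_onto insert_block drop_block) /=; last first.
  by move=> I /andP [_ /eqP]; apply: insert_drop_block.
apply: eq_big => J; last by move=> _; apply: weight_insert_block.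
rewrite drop_insert_block eqxx andbT ffunE unlift_none eqxx andbT andbC.
rewrite /partition_but; congr (_ && _); first by apply: eq_forallb => l; rewrite occ_insert_block.
apply/forallP/forallP => J_ne j.
  by have := J_ne (lift j0 j); rewrite eq_sym neq_lift ffunE liftK.
by case: (unliftP j0 j) => [j'|] ->; rewrite ?eqxx // ffunE liftK J_ne implybT.
Qed.

End EmptyBlock.

Section VanishingCoordinate.
Variable i0 : 'I_n.
Hypothesis a_i0 : a i0 = 0.

Lemma block_weight_setU1 S e :
  i0 \notin S -> block_weight (i0 |: S) e = block_weight S e * block_factor e #|S|.
Proof.
move=> i0_S; have sum_S : block_sum (i0 |: S) = block_sum S.
  by rewrite /block_sum big_setU1 //= a_i0 add0r.
rewrite /block_weight sum_S cardsU1 i0_S add1n.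
case S_0 : #|S| => [|s]; last by rewrite big_nat_recr //= -mulrA.
move/cards0_eq: S_0 => ->; rewrite !big_geq // !mulr1.
have := block_weight_set0 e; rewrite /block_weight cards0 big_geq // mulr1 => ->.
case: e => [|e]; last by rewrite mul0r.
by rewrite /block_factor muln0 subr0 mul1r.
Qed.

Section Blocks.
Variable k : nat.
Implicit Types I : {ffun 'I_k -> {set 'I_n}}.

Definition add_point (j0 : 'I_k) I : {ffun 'I_k -> {set 'I_n}} :=
  [ffun j => if j == j0 then i0 |: I j else I j].

Definition remove_point I : {ffun 'I_k -> {set 'I_n}} := [ffun j => I j :\ i0].

Definition marked_weight (j0 : 'I_k) I : R :=
  \sum_(d : {ffun 'I_k -> 'I_(g - 1 + n)} | (\sum_(j < k) (d j : nat))%N == (g - 2 + n)%N)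
    (\prod_(j < k) block_weight (I j) (d j)) * block_factor (d j0) #|I j0|.

Lemma covers_notin I : covers [set~ i0] I -> forall j, i0 \notin I j.
Proof. by move/forallP/(_ i0); rewrite !inE eqxx => /eqP /occ_eq0. Qed.

Lemma occ_add_point j0 I l : (forall j, i0 \notin I j) ->
  occ (add_point j0 I) l = (occ I l + (l == i0))%N.
Proof.
move=> i0_I; rewrite /occ (bigD1 j0) // [in RHS](bigD1 j0) //= ffunE eqxx in_setU1.
rewrite (eq_bigr (fun j => nat_of_bool (l \in I j))); last first.
  by move=> j /negbTE j_j0; rewrite ffunE j_j0.
case: eqP => [->|_]; last by rewrite addn0.
by rewrite (negbTE (i0_I j0)) addnC.
Qed.

Lemma remove_add_point j0 I :
  (forall j, i0 \notin I j) -> remove_point (add_point j0 I) = I.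
Proof.
move=> i0_I; apply/ffunP => j; rewrite !ffunE.
by case: eqP => _; rewrite ?setU1K //; apply/setDidPl; rewrite disjoint_sym disjoints1.
Qed.

Lemma add_remove_point j0 I :
  (forall j, (i0 \in I j) = (j == j0)) -> add_point j0 (remove_point I) = I.
Proof.
move=> i0_I; apply/ffunP => j; rewrite !ffunE.
case: eqP => [->|/eqP j_j0]; first by rewrite setD1K // i0_I.
by apply/setDidPl; rewrite disjoint_sym disjoints1 i0_I.
Qed.

Lemma partition_add_point j0 I : (forall j, i0 \notin I j) ->
  nonempty_blocks (add_point j0 I) && covers setT (add_point j0 I) =
  partition_but j0 [set~ i0] I.
Proof.
move=> i0_I; rewrite /partition_but andbC; congr (_ && _).
  apply: eq_forallb => l; rewrite occ_add_point // in_setT in_setC1.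
  by case: (l == i0); rewrite ?addn1 ?addn0.
apply: eq_forallb => j; rewrite ffunE; case: (j =P j0) => [->|_] //.
by apply/set0Pn; exists i0; rewrite setU11.
Qed.

Lemma weight_add_point j0 I :
  (forall j, i0 \notin I j) -> weight (add_point j0 I) = marked_weight j0 I.
Proof.
move=> i0_I; apply: eq_bigr => d _.
rewrite (bigD1 j0) // [in RHS](bigD1 j0) //= ffunE eqxx block_weight_setU1 // mulrAC.
by congr (_ * _ * _); apply: eq_bigr => j /negbTE j_j0; rewrite ffunE j_j0.
Qed.

Lemma sum_by_block_of_i0 (F : {ffun 'I_k -> {set 'I_n}} -> R) :
  \sum_(I | nonempty_blocks I && covers setT I) F I =
  \sum_(j0 < k) \sum_(I | (nonempty_blocks I && covers setT I) && (i0 \in I j0)) F I.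
Proof.
rewrite -(exchange_big_dep xpredT) //=; apply: eq_bigr => I /andP [_ /forallP /(_ i0)].
rewrite in_setT => /eqP /occ_eq1 [j0 i0_I].
by rewrite (big_pred1 j0) // => j; rewrite /= i0_I.
Qed.

Lemma sum_weight_block_of_i0 (j0 : 'I_k) :
  \sum_(I | (nonempty_blocks I && covers setT I) && (i0 \in I j0)) weight I =
  \sum_(I | partition_but j0 [set~ i0] I) marked_weight j0 I.
Proof.
have notin_removed I :
    remove_point (add_point j0 I) == I -> forall j, i0 \notin I j.
  by move/eqP => <- j; rewrite ffunE setD11.
rewrite (reindex_onto (add_point j0) remove_point) /=; last first.
  move=> I /andP [/andP [_ /forallP /(_ i0)]]; rewrite in_setT => /eqP /occ_eq1 [j1 i0_I].
  by rewrite i0_I => /eqP j0_j1; apply: add_remove_point => j; rewrite i0_I j0_j1.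
apply: eq_big => I; last by move=> /andP [_ /notin_removed]; apply: weight_add_point.
rewrite ffunE eqxx setU11 andbT.
apply/andP/idP => [[part /notin_removed i0_I] | part]; first by rewrite -partition_add_point.
have i0_I := covers_notin (proj1 (andP part)).
by rewrite partition_add_point // part remove_add_point.
Qed.

Lemma sum_block_factor I (d : {ffun 'I_k -> 'I_(g - 1 + n)}) :
  covers [set~ i0] I -> (\sum_(j < k) (d j : nat))%N = (g - 2 + n)%N ->
  \sum_(j < k) block_factor (d j) #|I j| = (2 * g - 2 + k)%:R.
Proof.
move=> cov sum_d; rewrite /block_factor sumrB -!natr_sum big_split /= -!big_distrr /= sum_d.
rewrite sum_nat_const card_ord muln1 (sum_card_covers cov) cardsC1 card_ord.
have n_gt0 : (0 < n)%N by case: (n) i0 => [[]|].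
have -> : (2 * (g - 2 + n) + k = (2 * g - 2 + k) + 2 * n.-1)%N by lia.
by rewrite natrD addrK.
Qed.

Lemma marked_weight_set0 j0 I :
  I j0 = set0 -> marked_weight j0 I = weight I.
Proof.
move=> I_j0; apply: eq_bigr => d _; rewrite (bigD1 j0) //= I_j0 block_weight_set0.
by case: (d j0 : nat) => [|e]; rewrite ?mulr0 ?mul0r // cards0 /block_factor subr0 mulr1.
Qed.

End Blocks.

Definition rest_sum k : R :=
  \sum_(J : {ffun 'I_k -> {set 'I_n}} | nonempty_blocks J && covers [set~ i0] J) weight J.

Lemma sum_weight_partitions k :
  \sum_(I : {ffun 'I_k.+1 -> {set 'I_n}} | ordered_set_partition I) weight I =
  (2 * g - 2 + k.+1)%:R * rest_sum k.+1 + (k.+1)%:R * rest_sum k.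
Proof.
under eq_bigl do rewrite ordered_set_partitionE.
rewrite sum_by_block_of_i0.
under eq_bigr => j0 _.
  rewrite sum_weight_block_of_i0 (bigID (fun I : {ffun 'I_k.+1 -> {set 'I_n}} => I j0 == set0)) /=.
  over.
rewrite big_split addrC /=; congr (_ + _).
  have M_gt0 : (0 < g - 1 + n)%N by lia.
  rewrite (eq_bigr (fun=> rest_sum k)); first by rewrite sumr_const card_ord mulr_natl.
  move=> j0 _.
  rewrite /rest_sum -(sum_weight_empty_block j0 _ M_gt0); apply: eq_bigr => I /andP [_ /eqP].
  exact: marked_weight_set0.
under eq_bigr do under eq_bigl do rewrite partition_but_nonempty.
rewrite exchange_big /= /rest_sum mulr_sumr; apply: eq_bigr => I /andP [_ cov].
rewrite exchange_big /= mulr_sumr; apply: eq_bigr => d /eqP sum_d.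
by rewrite -mulr_sumr (sum_block_factor cov sum_d) mulrC.
Qed.

Lemma rest_sum0 : (2 <= n)%N -> rest_sum 0 = 0.
Proof.
move=> n_ge2; have /set0Pn [l] : [set~ i0] != set0 by rewrite -card_gt0 cardsC1 card_ord; lia.
rewrite in_setC1 => l_i0; rewrite /rest_sum big1 // => J /andP [_ /forallP /(_ l)].
by rewrite /occ big_ord0 in_setC1 l_i0.
Qed.

Lemma rest_sum_n : rest_sum n = 0.
Proof.
rewrite /rest_sum big1 // => J /andP [/forallP J_ne /sum_card_covers].
rewrite cardsC1 card_ord => sum_J.
have : (\sum_(j < n) 1 <= \sum_(j < n) #|J j|)%N.
  by apply: leq_sum => j _; rewrite card_gt0 J_ne.
by rewrite sum_J sum_nat_const card_ord muln1; have := ltn_ord i0; lia.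
Qed.

Lemma Pgn_in_eq0 : (2 <= n)%N -> Pgn_in = 0.
Proof.
move=> n_ge2; pose f k := phi (Pcoef k) * (2 * g - 2 + k)%:R * rest_sum k.
have step k : phi (Pcoef k.+1) *
    \sum_(I : {ffun 'I_k.+1 -> {set 'I_n}} | ordered_set_partition I) weight I = f k.+1 - f k.
  have rec : phi (Pcoef k.+1) * (k.+1)%:R = - (phi (Pcoef k) * (2 * g - 2 + k)%:R).
    by rewrite -[(k.+1)%:R](rmorph_nat phi) -rmorphM Pcoef_rec rmorphN rmorphM rmorph_nat.
  by rewrite sum_weight_partitions mulrDr !mulrA rec mulNr.
rewrite /Pgn_in big_add1 /=; under eq_bigr => k _ do rewrite step.
by rewrite telescope_sumr // /f rest_sum_n rest_sum0 // !mulr0 subr0.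
Qed.

End VanishingCoordinate.
End Weights.

Lemma rmorph_Pgn_in (R R' : comNzRingType) (f : {rmorphism R -> R'})
    (phi : {rmorphism rat -> R}) (psi : {rmorphism rat -> R'}) g n
    (a : 'I_n -> R) (b : 'I_n -> R') :
  (forall x, f (phi x) = psi x) -> (forall l, f (a l) = b l) ->
  f (Pgn_in phi g a) = Pgn_in psi g b.
Proof.
move=> f_phi f_a.
have f_weight S e : f (block_weight phi a S e) = block_weight psi b S e.
  rewrite /block_weight /binom_in /block_sum !rmorphM !rmorph_prod f_phi.
  congr (_ * _ * _); apply: eq_bigr => i _; rewrite ?rmorphB ?rmorph_nat //.
  by rewrite rmorphD rmorph1 rmorphM rmorph_nat rmorph_sum (eq_bigr _ (fun l _ => f_a l)).
rewrite rmorph_sum; apply: eq_bigr => k _; rewrite rmorphM f_phi rmorph_sum.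
congr (_ * _); apply: eq_bigr => I _; rewrite rmorph_sum; apply: eq_bigr => d _.
by rewrite rmorph_prod; apply: eq_bigr => j _; rewrite f_weight.
Qed.

Section TotalDegree.
Variable n : nat.
Implicit Types (p q : {mpoly rat[n]}) (D : nat).

Lemma sum_predn_mdeg (m : 'X_{1..n}) :
  (forall i, 0 < m i)%N -> (\sum_(i < n) (m i).-1 + n)%N = mdeg m.
Proof.
move=> m_gt0; rewrite mdegE [in RHS](eq_bigr (fun i => (m i).-1 + 1)%N) => [|i _]; last first.
  by rewrite addn1 prednK.
by rewrite big_split /= sum_nat_const card_ord muln1.
Qed.

(* total degree at most D: [msize p] is 1 + the total degree of p, and 0 for p = 0. *)
Definition deg_le D p : bool := (msize p <= D.+1)%N.

Lemma deg_le_add D p q : deg_le D p -> deg_le D q -> deg_le D (p + q).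
Proof. by move=> p_D q_D; apply: leq_trans (msizeD_le _ _) _; rewrite geq_max; apply/andP. Qed.

Lemma deg_le_opp D p : deg_le D p -> deg_le D (- p).
Proof. by rewrite /deg_le msizeN. Qed.

Lemma deg_le_mul D1 D2 p q : deg_le D1 p -> deg_le D2 q -> deg_le (D1 + D2) (p * q).
Proof.
rewrite /deg_le; have [->|p_0] := eqVneq p 0; first by rewrite mul0r msize0.
have [->|q_0] := eqVneq q 0; first by rewrite mulr0 msize0.
by rewrite msizeM //; move: (msize p) (msize q) => x y; lia.
Qed.

Lemma deg_le_C D c : deg_le D c%:MP.
Proof. by rewrite /deg_le msizeC; case: (c != 0). Qed.

Lemma deg_le_nat D k : deg_le D k%:R.
Proof. by rewrite -(rmorph_nat (@mpolyC n rat)); apply: deg_le_C. Qed.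

Lemma deg_le_X i : deg_le 1 'X_i.
Proof. by rewrite /deg_le msizeX mdeg1. Qed.

Lemma deg_le_sum D (I : Type) (r : seq I) (P : pred I) (F : I -> {mpoly rat[n]}) :
  (forall i, P i -> deg_le D (F i)) -> deg_le D (\sum_(i <- r | P i) F i).
Proof.
move=> F_D; apply: (big_ind (deg_le D)) => //; last exact: deg_le_add.
by rewrite /deg_le msize0.
Qed.

Lemma deg_le_prod E (I : Type) (r : seq I) (P : pred I) (F : I -> {mpoly rat[n]}) (D : I -> nat) :
  (\sum_(i <- r | P i) D i <= E)%N -> (forall i, P i -> deg_le (D i) (F i)) ->
  deg_le E (\prod_(i <- r | P i) F i).
Proof.
move=> sum_D F_D; apply: leq_trans (_ : _ <= (\sum_(i <- r | P i) D i).+1)%N _; last by rewrite ltnS.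
apply: (big_rec2 (fun (x : nat) y => deg_le x y)); first by rewrite /deg_le msize1.
by move=> i x y P_i; apply: deg_le_mul; apply: F_D.
Qed.

End TotalDegree.

Section PolynomialP.
Variables (g n : nat).
Local Notation P := {mpoly rat[n]}.
Implicit Types (p : P) (m : 'X_{1..n}) (i : 'I_n).

Definition Pgn_poly : P := Pgn_in (@mpolyC n rat) g (fun i => 'X_i).

Lemma Pgn_meval a : Pgn g n a = Pgn_poly.@[a].
Proof.
have -> : Pgn g n a = Pgn_in idfun g a by [].
by symmetry; apply: rmorph_Pgn_in => [x|l]; [exact: mevalC | exact: mevalXU].
Qed.

Definition zero_coord i : n.-tuple P := [tuple if j == i then 0 else 'X_j | j < n].

Lemma comp_zero_coordX i m : 'X_[m] \mPo zero_coord i = if m i == 0%N then 'X_[m] else 0.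
Proof.
rewrite comp_mpolyX mpolyXE_id; case: (m i =P 0%N) => [m_i | /eqP m_i].
  apply: eq_bigr => j _; rewrite tnth_mktuple.
  by case: (j =P i) => [->|//]; rewrite m_i !expr0.
by rewrite (bigD1 i) //= tnth_mktuple eqxx expr0n (negbTE m_i) mul0r.
Qed.

Lemma mcoeff_comp_zero_coord p i m : m i = 0%N -> (p \mPo zero_coord i)@_m = p@_m.
Proof.
move=> m_i; rewrite comp_mpolyEX [in RHS](mpolyE p) !raddf_sum; apply: eq_bigr => m' _ /=.
rewrite !mcoeffZ comp_zero_coordX; case: ifP => // /negbT m'_i.
rewrite mcoeff0 mcoeffX; case: eqP => [m'_m | _]; last by rewrite mulr0.
by move: m'_i; rewrite m'_m m_i.
Qed.

Lemma msupp_comp_zero_coord p i m :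
  p \mPo zero_coord i = 0 -> m \in msupp p -> (0 < m i)%N.
Proof.
move=> p_i; apply: contraTT; rewrite -eqn0Ngt => /eqP m_i.
by rewrite mcoeff_msupp -(mcoeff_comp_zero_coord _ m_i) p_i mcoeff0 eqxx.
Qed.

Lemma deg_le_block_weight S e :
  deg_le (2 * e) (block_weight (@mpolyC n rat) (fun i => 'X_i) S e).
Proof.
have deg_x : deg_le 1 (2 * block_sum (fun i => 'X_i) S + 1).
  apply: deg_le_add; last by rewrite /deg_le msize1.
  rewrite -[1%N]add0n; apply: deg_le_mul; first exact: deg_le_nat.
  by apply: deg_le_sum => l _; apply: deg_le_X.
rewrite /block_weight /binom_in -[X in deg_le X _]addn0 -[X in deg_le X _]addn0.
apply: deg_le_mul; [apply: deg_le_mul; last exact: deg_le_C | ].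
  apply: (deg_le_prod (D := fun=> 1%N)); first by rewrite sum_nat_const card_ord muln1.
  by move=> i _; apply: deg_le_add deg_x _; apply: deg_le_opp; apply: deg_le_nat.
apply: (deg_le_prod (D := fun=> 0%N)); first by rewrite big1.
by move=> i _; apply: deg_le_add; [apply: deg_le_nat | apply: deg_le_opp; apply: deg_le_nat].
Qed.

Lemma deg_le_Pgn_poly : deg_le (2 * (g - 2 + n)) Pgn_poly.
Proof.
apply: deg_le_sum => k _; rewrite -[X in deg_le X _]add0n; apply: deg_le_mul; first exact: deg_le_C.
apply: deg_le_sum => I _; apply: deg_le_sum => d /eqP sum_d.
apply: (deg_le_prod (D := fun j => 2 * d j)%N); first by rewrite -big_distrr /= sum_d.
by move=> j _; apply: deg_le_block_weight.
Qed.

Hypotheses (g_ge2 : (2 <= g)%N) (n_ge2 : (2 <= n)%N).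

Lemma Pgn_poly_comp_zero_coord i : Pgn_poly \mPo zero_coord i = 0.
Proof.
rewrite (rmorph_Pgn_in (f := comp_mpoly (zero_coord i)) (psi := @mpolyC n rat) g
           (b := fun l => (zero_coord i)`_l)) => [|x|l].
- by apply: (@Pgn_in_eq0 _ _ _ _ _ g_ge2 i) => //; rewrite -tnth_nth tnth_mktuple eqxx.
- exact: comp_mpolyC.
- exact: comp_mpolyXU.
Qed.

Lemma msupp_Pgn_poly m :
  m \in msupp Pgn_poly -> (forall i, 0 < m i)%N /\ (mdeg m <= 2 * (g - 2 + n))%N.
Proof.
move=> m_P; split => [i|]; first exact: msupp_comp_zero_coord (Pgn_poly_comp_zero_coord i) m_P.
exact: leq_trans (msize_mdeg_lt m_P) deg_le_Pgn_poly.
Qed.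

End PolynomialP.

Import Pilot.Defs.
Unset Implicit Arguments.

Theorem corollary5p4 (g n : nat) (hg : (2 <= g)%N) (hn : (2 <= n)%N) :
  exists Q : mpoly n,
    mdeg_le Q (2 * g - 4 + n) /\
    forall a : 'I_n -> rat, Pgn g n a = (\prod_(i < n) a i) * meval Q a.
Proof.
pose p := Pgn_poly g n.
exists [seq (p@_m, [ffun i => (m i).-1]) | m <- msupp p]; split.
  rewrite /mdeg_le all_map; apply/allP => m /(msupp_Pgn_poly hg hn) [m_gt0 deg_m] /=.
  under eq_bigr do rewrite ffunE.
  rewrite -(leq_add2r n) (sum_predn_mdeg m_gt0); apply: leq_trans deg_m _; lia.
move=> a; rewrite Pgn_meval /Defs.meval big_map mulr_sumr mevalE.
apply: eq_big_seq => m /(msupp_Pgn_poly hg hn) [m_gt0 _] /=.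
rewrite mulrCA -big_split /=; congr (_ * _); apply: eq_bigr => i _.
by rewrite ffunE -exprS prednK.
Qed.
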